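(* Let $n\ge2$, $l_1,\dots,l_n\ge0$, with $l_{\max},l_{\min},i_M\neq i_m$ as below. Then $$Z_a\cap Z_{Br}=\prod_{m\ge1}\Phi_m^{\lfloor\frac{2l_{\max}+1}{m}\rfloor-\lfloor\frac{l_{\max}}{m}\rfloor-\lfloor\frac1m\rfloor+\max\left(0,\ \sum_{i\neq i_M,i_m}t_{l_i,m}-\lfloor\frac{l_{\min}}{m}\rfloor\right)}\,\mathbb{Z}[q,q^{-1}].$$
   Context: In $\mathbb{Z}[q,q^{-1}]$ set $\{i\}_q=q^i-1$, $\{i\}_{q,n}=\{i\}_q\cdots\{i-n+1\}_q$ (equal to $1$ for $n=0$), $\{n\}_q!=\{n\}_{q,n}$. For $l\ge0$, $I_l$ is the ideal generated by $f_{l,k}=\{l-k\}_q!\{k\}_q!$, $0\le k\le l$. Let $l_{\max}=\max_i l_i$, $l_{\min}=\min_i l_i$, and fix $i_M\ne i_m$ with $l_{i_M}=l_{\max}$, $l_{i_m}=l_{\min}$. Define $Z_a=\frac{\{2l_{\max}+1\}_{q,l_{\max}+1}}{\{1\}_q}\mathbb{Z}[q,q^{-1}]$ and $Z_{Br}=\frac{\{2l_{\max}+1\}_{q,l_{\max}+1}}{\{1\}_q\{l_{\min}\}_q!}\prod_{i\neq i_M,i_m}I_{l_i}$ (product of ideals over $i\in\{1,\dots,n\}\setminus\{i_M,i_m\}$). $t_{l,m}=\lfloor\frac{l+1}{m}\rfloor-1$ for $1\le m\le l$, $t_{l,m}=0$ for $m>l$. $\Phi_m$ is the $m$th cyclotomic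 polynomial. (The paper writes $\lfloor\frac{l_{\max}-1}{m}\rfloor$ in place of $\lfloor\frac{l_{\max}}{m}\rfloor$, a misprint inconsistent with the definitions and with the paper's examples.) *)

From HB Require Import structures.
From mathcomp Require Import all_boot all_order all_algebra all_field.
Set Implicit Arguments. Unset Strict Implicit. Unset Printing Implicit Defensive.
Import Order.TTheory GRing.Theory Num.Theory.
Local Open Scope ring_scope.

(* Q(q): the fraction field of Z[q]; Z[q,q^{-1}] sits inside it. *)
Notation Kq := {fraction {poly int}}.
Notation "p %:K" := (tofrac p) (at level 2, format "p %:K").

Definition laurent (x : Kq) : Prop :=
  exists (p : {poly int}) (k : nat), x = p%:K / ('X^k)%:K.

Definition qb (i : nat) : {poly int} := 'X^i - 1.
(* {i}_{q,n} = {i}_q ... {i-n+1}_q  (only used with n <= i) *)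
Definition qfall (i n : nat) : {poly int} := \prod_(j < n) qb (i - j).
Definition qfact (n : nat) : {poly int} := qfall n n.

Definition fgen (l k : nat) : {poly int} := qfact (l - k) * qfact k.

Definition Iid (l : nat) (x : Kq) : Prop :=
  exists c : 'I_l.+1 -> Kq, (forall k, laurent (c k)) /\
    x = \sum_(k < l.+1) c k * (fgen l k)%:K.

Definition idprod (P Q : Kq -> Prop) (x : Kq) : Prop :=
  exists s : seq (Kq * Kq), (forall u, u \in s -> P u.1 /\ Q u.2) /\
    x = \sum_(u <- s) u.1 * u.2.

Definition idbigprod (n : nat) (l : 'I_n -> nat) (s : seq 'I_n) : Kq -> Prop :=
  foldr (fun i acc => idprod (Iid (l i)) acc) laurent s.

Definition scaleset (c : Kq) (J : Kq -> Prop) (x : Kq) : Prop :=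
  exists y, J y /\ x = c * y.

Definition lmax (n : nat) (l : 'I_n -> nat) : nat := \max_(i < n) l i.
Definition lmin (n : nat) (l : 'I_n -> nat) : nat := \big[minn/lmax l]_(i < n) l i.

Definition tlm (l m : nat) : nat := if (m <= l)%N then ((l.+1 %/ m).-1)%N else 0%N.

Definition Za (n : nat) (l : 'I_n -> nat) : Kq -> Prop :=
  scaleset ((qfall (2 * lmax l).+1 (lmax l).+1)%:K / (qb 1)%:K) laurent.

Definition ZBr (n : nat) (l : 'I_n -> nat) (iM im : 'I_n) : Kq -> Prop :=
  scaleset ((qfall (2 * lmax l).+1 (lmax l).+1)%:K / ((qb 1)%:K * (qfact (lmin l))%:K))
    (idbigprod l [seq i <- enum 'I_n | (i != iM) && (i != im)]).

(* exponent of Phi_m; both nat subtractions are of nonnegative quantities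
   (the second one is exactly max(0, .)) *)
Definition expo (n : nat) (l : 'I_n -> nat) (iM im : 'I_n) (m : nat) : nat :=
  ((((2 * lmax l).+1 %/ m) - (lmax l %/ m) - (1 %/ m))
   + ((\sum_(i <- [seq i <- enum 'I_n | (i != iM) && (i != im)]) tlm (l i) m)
      - (lmin l %/ m)))%N.

(* the product over m >= 1; all factors with m > 2 lmax + 1 have exponent 0 *)
Definition RHSgen (n : nat) (l : 'I_n -> nat) (iM im : 'I_n) : {poly int} :=
  \prod_(1 <= m < (2 * lmax l).+2) ('Phi_m) ^+ expo l iM im m.

(* The intersection Z_a ∩ Z_Br is computed by factoring everything into
   cyclotomic polynomials inside Q(q).  Every polynomial appearing in the
   statement ({i}_q, {i}_{q,n}, {n}_q!, f_{l,k}) is a product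
   cprod N e = ∏_{1 <= m < N} Φ_m^(e m) with an explicit exponent function e.
   The proof then rests on three facts:
   - two distinct cyclotomic polynomials are comaximal in Z[q] up to a nonzero
     integer constant, and exactly comaximal when neither index divides the
     other (Bezout identities for q^a - 1 and q^b - 1);
   - the ideal I_l is principal, generated by ∏_m Φ_m^(t_{l,m}): the gcd of
     f_{l,0}, ..., f_{l,j} is built generator by generator, and at each step the
     two cofactors only involve mutually non-dividing indices, hence generate 1;
   - in Z[q,q^{-1}], if cprod a * y = cprod b * z then cprod (b - a) divides y.
   Consequently Z_Br is a principal fractional ideal, and the intersection of
   two principal fractional ideals g and g * B/A is g * cprod (b - a), which is
   the announced product of cyclotomic polynomials. *)

From HB Require Import structures.
From mathcomp Require Import all_boot all_order all_algebra all_field.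
From mathcomp Require Import ring zify.
Set Implicit Arguments. Unset Strict Implicit. Unset Printing Implicit Defensive.
Import Order.TTheory GRing.Theory Num.Theory.

(* Exponent of Φ_m in f_{l,j} = {l-j}_q! {j}_q!. *)
Definition fexp (l j m : nat) : nat := (l - j) %/ m + j %/ m.

(* Exponent of Φ_m in gcd(f_{l,0}, ..., f_{l,j}): Φ_m loses one factor from
   l/m as soon as some split (l-k) + k with k <= j carries modulo m, which
   first happens at k = (l mod m) + 1 and only when l mod m <= m - 2. *)
Definition gexp (l j m : nat) : nat :=
  l %/ m - (((l %% m).+2 <= m) && (l %% m < j)).

Lemma divn_carry l j m : 0 < m -> j <= l ->
  l %/ m = fexp l j m + (m <= (l - j) %% m + j %% m).
Proof. by move=> m0 jl; rewrite /fexp -divnD // subnK. Qed.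

Lemma modn_carry l j m : 0 < m -> j <= l ->
  l %% m = (l - j) %% m + j %% m - (m <= (l - j) %% m + j %% m) * m.
Proof. by move=> m0 jl; rewrite -modnD // subnK. Qed.

Lemma gexp_le_fexp l j m : 0 < m -> j <= l -> gexp l j m <= fexp l j m.
Proof.
move=> m0 jl; rewrite /gexp (divn_carry m0 jl).
have := modn_carry m0 jl; have := ltn_pmod (l - j) m0.
have := ltn_pmod j m0; have := leq_mod j m.
case: (leqP m ((l - j) %% m + j %% m)) => carry /=; last by rewrite addn0 leq_subr.
move: (l %% m) ((l - j) %% m) (j %% m) carry => r x y carry y_le_j y_lt x_lt.
rewrite mul1n => er.
have [-> ->] : r.+2 <= m /\ r < j by lia.
by rewrite addnK.
Qed.

Lemma gexp_nonincr l j m : gexp l j.+1 m <= gexp l j m.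
Proof.
rewrite /gexp; apply: leq_sub2l.
case: ((l %% m).+2 <= m) => //=; case: (ltnP (l %% m) j) => // h.
by rewrite (ltn_trans h (ltnSn j)).
Qed.

Lemma gexp_antimono l j j' m : j <= j' -> gexp l j' m <= gexp l j m.
Proof.
elim: j' => [|j' IH]; first by rewrite leqn0 => /eqP ->.
rewrite leq_eqVlt => /orP [/eqP -> //|]; rewrite ltnS => h.
exact: leq_trans (gexp_nonincr l j' m) (IH h).
Qed.

Lemma gexp0 l m : gexp l 0 m = fexp l 0 m.
Proof. by rewrite /gexp /fexp ltn0 andbF !subn0 div0n addn0. Qed.

Lemma gexp_tlm l m : 0 < m -> gexp l l m = tlm l m.
Proof.
move=> m0; rewrite /gexp /tlm; case: (leqP m l) => ml; last by rewrite divn_small.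
have rl : l %% m < l by apply: leq_trans ml; apply: ltn_pmod.
rewrite rl andbT (divnS _ m0) -subn1.
have e : l.+1 %% m = (l %% m).+1 %% m by rewrite -addn1 -modnDml addn1.
case: (ltnP (l %% m).+1 m) => h.
  by rewrite /dvdn e modn_small // add0n.
have hm : (l %% m).+1 = m by apply/eqP; rewrite eqn_leq h ltn_pmod.
by rewrite /dvdn e hm modnn /= subn0 add1n subn1.
Qed.

Lemma gexp_drop l j m : gexp l j.+1 m < gexp l j m -> l %% m = j /\ j.+2 <= m.
Proof.
rewrite /gexp; case room: ((l %% m).+2 <= m); rewrite ?ltnn //=.
case: (ltnP (l %% m) j) => h1; first by rewrite (ltn_trans h1 (ltnSn j)) ltnn.
case: (ltnP (l %% m) j.+1) => h2; last by rewrite ltnn.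
have e : l %% m = j by apply/eqP; rewrite eqn_leq h1 -ltnS h2.
by split=> //; rewrite -e.
Qed.

Lemma fexp_excess l j n : 0 < n -> j <= l -> gexp l j n < fexp l j n ->
  [/\ l %% n = (l - j) %% n + j %% n, (l %% n).+2 <= n & l %% n < j].
Proof.
move=> n0 jl; rewrite /gexp (divn_carry n0 jl).
have := modn_carry n0 jl.
case: (leqP n ((l - j) %% n + j %% n)) => c /= r.
  by case: (_ && _) => /=; rewrite ?addnK ?subn0 ?ltnn // addn1 ltnNge leqnSn.
rewrite /= mul0n addn0 subn0 in r *.
by case: ((l %% n).+2 <= n); case: (l %% n < j); rewrite //= ?subn0 ?ltnn.
Qed.

Lemma gexp_step_nondvd l j m n : 0 < m -> 0 < n -> j.+1 <= l ->
  gexp l j.+1 m < gexp l j m -> gexp l j.+1 n < fexp l j.+1 n ->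
  ~~ (m %| n) && ~~ (n %| m).
Proof.
move=> m0 n0 jl /gexp_drop [em jm] /(fexp_excess n0 jl) [en bn cn].
have nj : n <= j.+1.
  rewrite leqNgt; apply/negP => h; move: cn; rewrite en (modn_small h).
  by rewrite ltnNge leq_addl.
apply/andP; split.
  by apply/negP => /(dvdn_leq n0) h; move: (leq_trans jm (leq_trans h nj)); rewrite ltnn.
apply/negP => nm.
have e1 : l %% n = j %% n by rewrite -(modn_dvdm l nm) em.
have e2 : j.+1 %% n = (l %% n).+1 by rewrite -addn1 -modnDml -e1 addn1 modn_small.
rewrite e2 in en.
by have := leq_addl ((l - j.+1) %% n) (l %% n).+1; rewrite -en ltnn.
Qed.

Local Open Scope ring_scope.

Definition cprod (N : nat) (e : nat -> nat) : {poly int} :=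
  \prod_(1 <= m < N) 'Phi_m ^+ e m.

Lemma cprod_eq N e1 e2 :
  (forall m, (0 < m < N)%N -> e1 m = e2 m) -> cprod N e1 = cprod N e2.
Proof. by move=> H; apply: eq_big_nat => m /H ->. Qed.

Lemma cprodD N e1 e2 : cprod N (fun m => e1 m + e2 m)%N = cprod N e1 * cprod N e2.
Proof. by rewrite /cprod -big_split; apply: eq_bigr => m _; rewrite exprD. Qed.

Lemma cprod_sum N (I : Type) (s : seq I) (e : I -> nat -> nat) :
  cprod N (fun m => \sum_(i <- s) e i m)%N = \prod_(i <- s) cprod N (e i).
Proof.
elim: s => [|i s IH]; first by rewrite big_nil /cprod big1 // => m _; rewrite big_nil expr0.
by rewrite big_cons -IH -cprodD; apply: cprod_eq => m _; rewrite big_cons.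
Qed.

Lemma cprod_sub N e1 e2 : (forall m, (0 < m < N)%N -> e1 m <= e2 m)%N ->
  cprod N e2 = cprod N e1 * cprod N (fun m => e2 m - e1 m)%N.
Proof. by move=> H; rewrite -cprodD; apply: cprod_eq => m /H h; rewrite subnKC. Qed.

Lemma cprod_extract N e m : (0 < m < N)%N -> (0 < e m)%N ->
  cprod N e = 'Phi_m * cprod N (fun k => e k - (k == m))%N.
Proof.
move=> Hm Hem; have -> : 'Phi_m = cprod N (fun k => (k == m : nat)).
  rewrite /cprod (bigD1_seq m) ?mem_index_iota ?iota_uniq //= eqxx expr1.
  by rewrite big1 ?mulr1 // => k /negbTE ->.
rewrite -cprodD; apply: cprod_eq => k _.
by case: eqP => [->|_]; rewrite ?subn0 ?add0n // add1n subn1 prednK.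
Qed.

Lemma cprod_monic N e : cprod N e \is monic.
Proof. by apply: monic_prod => m _; apply: monic_exp; apply: Cyclotomic_monic. Qed.

Lemma cprod_neq0 N e : cprod N e != 0.
Proof. exact: monic_neq0 (cprod_monic N e). Qed.

Lemma qb_cprod N i : (0 < i < N)%N -> qb i = cprod N (fun m => (m %| i : nat)).
Proof.
case/andP=> i0 iN; rewrite /cprod.
rewrite (eq_bigr (fun m => if (m %| i)%N then 'Phi_m else 1)); last first.
  by move=> m _; case: (m %| i)%N.
rewrite -big_mkcond -big_filter /qb -prod_Cyclotomic //; apply: perm_big.
apply: uniq_perm; [exact: divisors_uniq | exact/filter_uniq/iota_uniq |].
move=> d; rewrite mem_filter mem_index_iota -dvdn_divisors //.
case dd: (d %| i)%N => //=; symmetry; apply/andP; split.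
  by rewrite lt0n; apply: contraTneq i0 => d0; move: dd; rewrite d0 dvd0n => /eqP ->.
exact: leq_ltn_trans (dvdn_leq i0 dd) iN.
Qed.

Lemma qb_neq0 i : (0 < i)%N -> qb i != 0.
Proof. by move=> i0; rewrite (@qb_cprod i.+1) ?i0 ?leqnn //; apply: cprod_neq0. Qed.

Lemma qb_split N m d : (0 < d)%N -> (d %| m)%N -> (0 < m < N)%N ->
  qb m = qb d * cprod N (fun e => ((e %| m) && ~~ (e %| d))%N : nat).
Proof.
move=> d0 dm /andP [m0 mN].
have dN : (0 < d < N)%N by rewrite d0 /=; apply: leq_ltn_trans mN; apply: dvdn_leq.
rewrite (@qb_cprod N) ?m0 // (qb_cprod dN) -cprodD; apply: cprod_eq => k _.
case kd: (k %| d)%N; last by rewrite add0n andbT.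
by rewrite (dvdn_trans kd dm).
Qed.

Lemma qfactS n : qfact n.+1 = qb n.+1 * qfact n.
Proof. by rewrite /qfact /qfall big_ord_recl subn0. Qed.

Lemma qfact_cprod N n : (n < N)%N -> qfact n = cprod N (fun m => n %/ m)%N.
Proof.
elim: n => [|n IH] nN.
  by rewrite /qfact /qfall big_ord0 /cprod big1 // => m _; rewrite div0n.
rewrite qfactS IH ?(ltnW nN) // (@qb_cprod N) // -cprodD.
by apply: cprod_eq => m /andP [m0 _]; rewrite divnS.
Qed.

Lemma fgen_cprod N l k : (k <= l)%N -> (l < N)%N -> fgen l k = cprod N (fexp l k).
Proof.
move=> kl lN; have kN : (k < N)%N by apply: leq_ltn_trans lN.
have lkN : (l - k < N)%N by apply: leq_ltn_trans lN; apply: leq_subr.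
by rewrite /fgen (@qfact_cprod N) // (@qfact_cprod N k) // -cprodD.
Qed.

Lemma qfall_fact i n : (n <= i)%N -> qfall i n * qfact (i - n) = qfact i.
Proof.
elim: n => [|n IH] ni; first by rewrite /qfall big_ord0 mul1r subn0.
rewrite /qfall big_ord_recr /= -/(qfall i n) -IH ?(ltnW ni) //.
have -> : (i - n = (i - n.+1).+1)%N by rewrite subnS prednK // subn_gt0.
by rewrite qfactS mulrA.
Qed.

Lemma qfall_cprod N i n : (n <= i)%N -> (i < N)%N ->
  qfall i n = cprod N (fun m => i %/ m - (i - n) %/ m)%N.
Proof.
move=> ni iN; have inN : (i - n < N)%N by apply: leq_ltn_trans iN; apply: leq_subr.
apply: (@mulIf _ (qfact (i - n))); first by rewrite (@qfact_cprod N) // cprod_neq0.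
rewrite qfall_fact // (@qfact_cprod N) // (@qfact_cprod N (i - n)) // -cprodD.
by apply: cprod_eq => m _; rewrite subnK //; apply/leq_div2r/leq_subr.
Qed.

Definition comax (A B : {poly int}) (c : int) : Prop :=
  exists u v : {poly int}, u * A + v * B = c%:P.

Lemma comaxC A B c : comax A B c -> comax B A c.
Proof. by case=> u [v e]; exists v, u; rewrite addrC. Qed.

Lemma comax1 B : comax 1 B 1.
Proof. by exists 1, 0; rewrite mul0r addr0 mulr1. Qed.

Lemma comaxM A B C c d : comax A C c -> comax B C d -> comax (A * B) C (c * d).
Proof.
case=> u1 [v1 e1] [u2 [v2 e2]].
exists (u1 * u2), (v1 * (u2 * B) + u1 * A * v2 + v1 * v2 * C).
by rewrite polyCM -e1 -e2; ring.
Qed.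

Lemma comax_dvdl A K B c : comax (A * K) B c -> comax A B c.
Proof. by case=> u [v e]; exists (u * K), v; rewrite -e; ring. Qed.

(* Euclid's algorithm on exponents: (q^a - 1, q^b - 1) ∋ q^gcd(a,b) - 1. *)
Lemma qb_bezout a b : exists u v : {poly int}, u * qb a + v * qb b = qb (gcdn a b).
Proof.
have qb_sub x y : (y <= x)%N -> qb x = 'X^(x - y) * qb y + qb (x - y).
  by move=> yx; rewrite /qb -{1}(subnK yx) exprD; ring.
have [n] := ubnP (a + b); elim: n a b => // n IH [|a] [|b] Hab.
- by exists 0, 1; rewrite gcd0n mul0r add0r mul1r.
- by exists 0, 1; rewrite gcd0n mul0r add0r mul1r.
- by exists 1, 0; rewrite gcdn0 mul0r addr0 mul1r.
case: (leqP b.+1 a.+1) => ba.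
  have [u [v e]] := IH (a.+1 - b.+1)%N b.+1 ltac:(lia).
  exists u, (v - u * 'X^(a.+1 - b.+1)).
  have -> : gcdn a.+1 b.+1 = gcdn (a.+1 - b.+1) b.+1.
    by rewrite -{1}(subnK ba) gcdnC gcdnDr gcdnC.
  rewrite (qb_sub _ _ ba) -e; ring.
have ab : (a.+1 <= b.+1)%N by apply: ltnW.
have [u [v e]] := IH a.+1 (b.+1 - a.+1)%N ltac:(lia).
exists (u - v * 'X^(b.+1 - a.+1)), v.
have -> : gcdn a.+1 b.+1 = gcdn a.+1 (b.+1 - a.+1) by rewrite -{1}(subnK ab) gcdnDr.
rewrite (qb_sub _ _ ab) -e; ring.
Qed.

(* If neither of m, n divides the other, Φ_m and Φ_n are comaximal:
   divide the Bezout identity for q^m - 1, q^n - 1 by q^gcd(m,n) - 1. *)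
Lemma Phi_comax_nondvd m n : (0 < m)%N -> (0 < n)%N -> ~~ (m %| n)%N -> ~~ (n %| m)%N ->
  comax 'Phi_m 'Phi_n 1.
Proof.
move=> m0 n0 mn nm; set N := (m + n).+1; set d := gcdn m n.
have d0 : (0 < d)%N by rewrite gcdn_gt0 m0.
have [u [v e]] := qb_bezout m n.
rewrite (@qb_split N m d) ?dvdn_gcdl ?m0 ?ltnS ?leq_addr // in e.
rewrite (@qb_split N n d) ?dvdn_gcdr ?n0 ?ltnS ?leq_addl // -/d in e.
set X := cprod N _ in e; set Y := cprod N _ in e.
have {}e : u * X + v * Y = 1.
  by apply: (mulfI (qb_neq0 d0)); rewrite mulr1 -[RHS]e; ring.
have md : ~~ (m %| d)%N by apply: contra mn => H; apply: dvdn_trans H (dvdn_gcdr _ _).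
have nd : ~~ (n %| d)%N by apply: contra nm => H; apply: dvdn_trans H (dvdn_gcdl _ _).
have [X' HX] : exists X', X = 'Phi_m * X'.
  by eexists; rewrite /X (@cprod_extract N _ m) // ?m0 ?ltnS ?leq_addr ?dvdnn ?md.
have [Y' HY] : exists Y', Y = 'Phi_n * Y'.
  by eexists; rewrite /Y (@cprod_extract N _ n) // ?n0 ?ltnS ?leq_addl ?dvdnn ?nd.
apply: (@comax_dvdl _ X'); apply: comaxC; apply: (@comax_dvdl _ Y'); apply: comaxC.
by exists u, v; rewrite polyC1 -e HX HY; ring.
Qed.

Lemma geom_split (x : {poly int}) (p : nat) :
  \sum_(i < p) x ^+ i = p%:R + (x - 1) * \sum_(i < p) \sum_(j < i) x ^+ j.
Proof.
rewrite mulr_sumr; under [X in _ = _ + X]eq_bigr => i _ do rewrite -subrX1.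
by rewrite sumrB sumr_const card_ord addrC subrK.
Qed.

(* If m | n, m != n, then Φ_m and Φ_n are comaximal up to a prime p | n/m:
   writing n = k p with m | k, Φ_n divides (q^n - 1)/(q^k - 1), which is
   congruent to p modulo q^k - 1, itself a multiple of Φ_m. *)
Lemma Phi_comax_dvd m n : (0 < m)%N -> (0 < n)%N -> (m %| n)%N -> m != n ->
  exists2 c : int, c != 0 & comax 'Phi_m 'Phi_n c.
Proof.
move=> m0 n0 mn mNn; set r := (n %/ m)%N.
have nE : n = (r * m)%N by rewrite divnK.
have r1 : (1 < r)%N.
  case: r nE => [|[|r']] nE //; first by move: n0; rewrite nE.
  by move: mNn; rewrite nE mul1n eqxx.
set p := pdiv r; have pp : prime p by apply: pdiv_prime.
have pr : (p %| r)%N by apply: pdiv_dvd.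
set k := (n %/ p)%N.
have kE : k = (r %/ p * m)%N.
  by rewrite /k nE -{1}(divnK pr) mulnAC mulnK // prime_gt0.
have kp : (k * p)%N = n by rewrite kE mulnAC divnK.
have k0 : (0 < k)%N by move: n0; rewrite -kp muln_gt0 => /andP [].
have kn : (k < n)%N by rewrite -kp ltn_Pmulr // prime_gt1.
have mk : (m %| k)%N by rewrite kE dvdn_mull.
set x : {poly int} := 'X^k.
have qn : qb n = qb k * \sum_(i < p) x ^+ i by rewrite /qb -kp exprM -subrX1.
rewrite (@qb_split n.+1 n k) ?n0 ?ltnSn -?kp ?dvdn_mulr // kp in qn.
have {}qn := mulfI (qb_neq0 k0) qn.
have nk : ~~ (n %| k)%N by apply/negP => /(dvdn_leq k0); rewrite leqNgt kn.
rewrite (@cprod_extract n.+1 _ n) ?n0 ?ltnSn ?dvdnn ?nk // in qn.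
have [Q HQ] : exists Q, x - 1 = 'Phi_m * Q.
  eexists; rewrite -[x - 1]/(qb k) (@qb_cprod k.+1 k) ?k0 ?ltnSn //.
  by rewrite (@cprod_extract k.+1 _ m) // ?m0 ?mk // ltnS dvdn_leq.
set R := cprod _ _ in qn; set S := \sum_(i < p) \sum_(j < i) x ^+ j.
have G := geom_split x p; rewrite -qn HQ -/S in G.
exists (p%:R : int); first by rewrite pnatr_eq0 -lt0n prime_gt0.
exists (- (Q * S)), R; rewrite polyC_natr.
have -> : (p%:R : {poly int}) = 'Phi_n * R - 'Phi_m * Q * S by rewrite G addrK.
ring.
Qed.

Lemma Phi_comax m n : (0 < m)%N -> (0 < n)%N -> m != n ->
  exists2 c : int, c != 0 & comax 'Phi_m 'Phi_n c.
Proof.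
move=> m0 n0 mn.
case mdn: (m %| n)%N; first exact: Phi_comax_dvd.
case ndm: (n %| m)%N.
  have [c c0 h] := Phi_comax_dvd n0 m0 ndm (contra_neq esym mn).
  by exists c; last exact: comaxC.
by exists 1 => //; apply: Phi_comax_nondvd; rewrite ?mdn ?ndm.
Qed.

Section ComaxCprod.
(* Q is a multiplicatively closed set of integer constants (either {1} or the
   nonzero integers); comaximality up to Q lifts from cyclotomic factors to
   cyclotomic products. *)
Variable Q : int -> Prop.
Hypothesis Q1 : Q 1.
Hypothesis QM : forall a b, Q a -> Q b -> Q (a * b).

Lemma comax_cprodl N e B :
  (forall m, (0 < m < N)%N -> (0 < e m)%N -> exists2 c, Q c & comax 'Phi_m B c) ->
  exists2 c, Q c & comax (cprod N e) B c.
Proof.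
move=> H; rewrite /cprod big_seq.
apply: (big_ind (fun x => exists2 c, Q c & comax x B c)).
- by exists 1 => //; apply: comax1.
- by move=> x y [c Qc hc] [d Qd hd]; exists (c * d); [exact: QM | exact: comaxM].
move=> i; rewrite mem_index_iota => Hi.
case ei: (e i) => [|k]; first by exists 1 => //; rewrite expr0; apply: comax1.
have [c Qc hc] := H i Hi ltac:(by rewrite ei).
elim: k {ei} => [|k [d Qd hd]]; first by exists c; rewrite ?expr1.
by exists (c * d); [exact: QM | rewrite exprS; apply: comaxM].
Qed.

Lemma comax_cprod N e1 e2 :
  (forall m n, (0 < m < N)%N -> (0 < n < N)%N -> (0 < e1 m)%N -> (0 < e2 n)%N ->
     exists2 c, Q c & comax 'Phi_m 'Phi_n c) ->
  exists2 c, Q c & comax (cprod N e1) (cprod N e2) c.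
Proof.
move=> H; apply: comax_cprodl => m Hm em.
suff [c Qc hc] : exists2 c, Q c & comax (cprod N e2) 'Phi_m c by exists c; last exact: comaxC.
apply: comax_cprodl => n Hn en.
by have [c Qc hc] := H m n Hm Hn em en; exists c; last exact: comaxC.
Qed.

End ComaxCprod.

Lemma Xn_neq0 k : ('X^k : {poly int})%:K != 0 :> Kq.
Proof. by rewrite tofrac_eq0 monic_neq0 // monicXn. Qed.

Lemma laurent_poly p : laurent p%:K.
Proof. by exists p, 0%N; rewrite expr0 tofrac1 divr1. Qed.

Lemma laurent0 : laurent 0.
Proof. by rewrite -tofrac0; apply: laurent_poly. Qed.

Lemma laurent1 : laurent 1.
Proof. by rewrite -tofrac1; apply: laurent_poly. Qed.

Lemma laurentM x y : laurent x -> laurent y -> laurent (x * y).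
Proof.
case=> p [a ->] [r [b ->]]; exists (p * r), (a + b)%N.
by rewrite !tofracM exprD tofracM invfM mulrACA.
Qed.

Lemma laurent_common x y : laurent x -> laurent y ->
  exists p r k, x = p%:K / ('X^k)%:K /\ y = r%:K / ('X^k)%:K.
Proof.
case=> p [a ->] [r [b ->]]; exists (p * 'X^b), (r * 'X^a), (a + b)%N.
rewrite !tofracM exprD tofracM invfM; split.
  by rewrite mulrACA (mulfV (Xn_neq0 b)) mulr1.
by rewrite [_^-1 * _]mulrC mulrACA (mulfV (Xn_neq0 a)) mulr1.
Qed.

Lemma laurentD x y : laurent x -> laurent y -> laurent (x + y).
Proof.
move=> hx hy; have [p [r [k [-> ->]]]] := laurent_common hx hy.
by exists (p + r), k; rewrite tofracD mulrDl.
Qed.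

Lemma laurent_sum (I : Type) (r : seq I) (F : I -> Kq) :
  (forall i, laurent (F i)) -> laurent (\sum_(i <- r) F i).
Proof. by move=> H; apply: (big_ind laurent); [exact: laurent0 | exact: laurentD |]. Qed.

Local Notation principal g := (scaleset g laurent).

Lemma principal_add g x y : principal g x -> principal g y -> principal g (x + y).
Proof.
case=> w1 [h1 ->] [w2 [h2 ->]]; exists (w1 + w2); split; first exact: laurentD.
by rewrite mulrDr.
Qed.

Lemma principal1 x : principal 1 x <-> laurent x.
Proof. by split=> [[y [hy ->]]|hx]; [rewrite mul1r | exists x; rewrite mul1r]. Qed.

Lemma scaleset_principal g h x : scaleset g (principal h) x <-> principal (g * h) x.
Proof.
split=> [[y [[w [hw ->]] ->]]|[w [hw ->]]].
  by exists w; split; rewrite ?mulrA.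
by exists (h * w); split; [exists w | rewrite mulrA].
Qed.

Lemma scaleset_ext g (J J' : Kq -> Prop) :
  (forall y, J y <-> J' y) -> forall x, scaleset g J x <-> scaleset g J' x.
Proof. by move=> H x; split=> -[y [/H hy ->]]; exists y. Qed.

Section IdealIl.
Variables (l N : nat).
Hypothesis lN : (l < N)%N.

Lemma Iid_add x y : Iid l x -> Iid l y -> Iid l (x + y).
Proof.
case=> c1 [h1 ->] [c2 [h2 ->]]; exists (fun k => c1 k + c2 k); split.
  by move=> k; apply: laurentD.
by rewrite -big_split; apply: eq_bigr => k _; rewrite mulrDl.
Qed.

Lemma Iid_scale w x : laurent w -> Iid l x -> Iid l (w * x).
Proof.
move=> hw [c [h ->]]; exists (fun k => w * c k); split; first by move=> k; apply: laurentM.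
by rewrite mulr_sumr; apply: eq_bigr => k _; rewrite mulrA.
Qed.

Lemma Iid_gen k : (k <= l)%N -> Iid l (fgen l k)%:K.
Proof.
move=> kl; pose k' : 'I_l.+1 := Ordinal (kl : (k < l.+1)%N).
exists (fun j => if j == k' then 1 else 0); split.
  by move=> j; case: (j == k'); [exact: laurent1 | exact: laurent0].
rewrite (bigD1 k') //= eqxx mul1r big1 ?addr0 // => j /negbTE ->.
by rewrite mul0r.
Qed.

(* ∏_m Φ_m^(gexp l j m) is a Z[q]-combination of f_{l,0}, ..., f_{l,j}: at
   each step the dropped part of the old gcd and the excess of the new
   generator are comaximal, by gexp_step_nondvd and Phi_comax_nondvd. *)
Lemma gcd_prefix_in j : (j <= l)%N -> Iid l (cprod N (gexp l j))%:K.
Proof.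
elim: j => [_|j IH jl].
  rewrite (@cprod_eq _ _ (fexp l 0)) -?fgen_cprod // => [|m _]; last exact: gexp0.
  exact: Iid_gen.
have HA : cprod N (gexp l j) =
    cprod N (gexp l j.+1) * cprod N (fun m => gexp l j m - gexp l j.+1 m)%N.
  by apply: cprod_sub => m _; apply: gexp_nonincr.
have HB : fgen l j.+1 =
    cprod N (gexp l j.+1) * cprod N (fun m => fexp l j.+1 m - gexp l j.+1 m)%N.
  rewrite (@fgen_cprod N) //.
  by apply: cprod_sub => m /andP [m0 _]; apply: gexp_le_fexp.
have [c -> [u [v e]]] : exists2 c, c = 1 & comax
    (cprod N (fun m => gexp l j m - gexp l j.+1 m)%N)
    (cprod N (fun m => fexp l j.+1 m - gexp l j.+1 m)%N) c.
  apply: comax_cprod => [|a b -> ->|m n /andP [m0 _] /andP [n0 _]]; rewrite ?mulr1 //.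
  rewrite !subn_gt0 => hm hn; exists 1 => //.
  by case/andP: (gexp_step_nondvd m0 n0 jl hm hn) => h1 h2; apply: Phi_comax_nondvd.
have -> : cprod N (gexp l j.+1) = u * cprod N (gexp l j) + v * fgen l j.+1.
  by rewrite HA HB -[LHS]mulr1 -polyC1 -e; ring.
rewrite tofracD (tofracM u) (tofracM v).
apply: Iid_add; apply: Iid_scale; try exact: laurent_poly.
  exact: IH (ltnW jl).
exact: Iid_gen jl.
Qed.

Lemma tlm_le_fexp k m : (k <= l)%N -> (0 < m)%N -> (tlm l m <= fexp l k m)%N.
Proof.
move=> kl m0; rewrite -gexp_tlm //.
exact: leq_trans (gexp_antimono l m kl) (gexp_le_fexp m0 kl).
Qed.

Lemma Iid_principal x : Iid l x <-> principal (cprod N (tlm l))%:K x.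
Proof.
have gen_in : Iid l (cprod N (tlm l))%:K.
  rewrite -(@cprod_eq _ (gexp l l)) => [|m /andP [m0 _]]; last exact: gexp_tlm.
  exact: gcd_prefix_in.
split=> [[c [h ->]]|[w [hw ->]]]; last by rewrite mulrC; apply: Iid_scale.
exists (\sum_(k < l.+1) c k * (cprod N (fun m => fexp l k m - tlm l m)%N)%:K); split.
  by apply: laurent_sum => k; apply: laurentM => //; apply: laurent_poly.
rewrite mulr_sumr; apply: eq_bigr => k _.
rewrite (@fgen_cprod N) ?leq_ord // (@cprod_sub _ (tlm l) (fexp l k)); last first.
  by move=> m /andP [m0 _]; apply: tlm_le_fexp; rewrite ?leq_ord.
by rewrite tofracM mulrCA.
Qed.

End IdealIl.

(* Division by a monic polynomial M coprime to A up to a nonzero integer: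
   from M * r = A * p and u A + v M = c we get c p = M (u r + v p), and M
   being monic, M divides p in Z[q]. *)
Lemma monic_coprime_cancel (A M p r : {poly int}) (c : int) : M \is monic -> c != 0 ->
  comax A M c -> M * r = A * p -> exists t, p = M * t.
Proof.
move=> mM c0 [u [v e]] eMr.
have h : M %| p.
  rewrite -(dvdpZr _ _ c0) -mul_polyC -e.
  have -> : (u * A + v * M) * p = M * (u * r + v * p) by rewrite mulrDl -mulrA -eMr; ring.
  exact: dvdp_mulr.
by have [t ->] := dvdpP_int h; exists t; rewrite zprimitive_monic.
Qed.

Lemma cprod_cancel_common N a b p r : cprod N a * p = cprod N b * r ->
  cprod N (fun m => a m - b m)%N * p = cprod N (fun m => b m - a m)%N * r.
Proof.
set c := fun m => minn (a m) (b m).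
have split e1 e2 : cprod N e1 = cprod N (fun m => minn (e1 m) (e2 m)) *
                                cprod N (fun m => e1 m - e2 m)%N.
  rewrite (@cprod_sub _ (fun m => minn (e1 m) (e2 m)) e1) => [|m _]; last exact: geq_minl.
  by congr (_ * _); apply: cprod_eq => m _; rewrite minnE subKn // leq_subr.
rewrite (split a b) (split b a) (@cprod_eq N (fun m => minn (b m) (a m)) c) => [|m _];
  last exact: minnC.
by rewrite -!mulrA => /(mulfI (cprod_neq0 N c)).
Qed.

Lemma cprod_cancel N a b y z : laurent y -> laurent z ->
  (cprod N a)%:K * y = (cprod N b)%:K * z ->
  exists2 w, laurent w & y = (cprod N (fun m => b m - a m)%N)%:K * w.
Proof.
move=> hy hz; have [p [r [k [-> ->]]]] := laurent_common hy hz.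
rewrite !mulrA -!tofracM => /(mulIf (invr_neq0 (Xn_neq0 k))) /eqP.
rewrite tofrac_eq => /eqP /cprod_cancel_common e.
have [c c0 hc] : exists2 c : int, c != 0 &
    comax (cprod N (fun m => a m - b m)%N) (cprod N (fun m => b m - a m)%N) c.
  apply: comax_cprod => [|c1 c2|m n /andP [m0 _] /andP [n0 _]]; first exact: oner_neq0.
    exact: mulf_neq0.
  rewrite !subn_gt0 => hm hn; apply: Phi_comax => //.
  by apply: contraTneq hm => ->; rewrite -leqNgt ltnW.
have [t ->] := monic_coprime_cancel (cprod_monic _ _) c0 hc (esym e).
by exists (t%:K / ('X^k)%:K); [exists t, k | rewrite tofracM mulrA].
Qed.

Lemma principal_meet N a b c x :
  principal (cprod N c)%:K x /\
  principal ((cprod N c)%:K / (cprod N a)%:K * (cprod N b)%:K) x <->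
  principal (cprod N c * cprod N (fun m => b m - a m)%N)%:K x.
Proof.
have hA : (cprod N a)%:K != 0 :> Kq by rewrite tofrac_eq0 cprod_neq0.
have hC : (cprod N c)%:K != 0 :> Kq by rewrite tofrac_eq0 cprod_neq0.
split=> [[[y [hy ->]] [z [hz e]]]|[w [hw ->]]].
  have ey : y = (cprod N a)%:K^-1 * ((cprod N b)%:K * z).
    by apply: (mulfI hC); rewrite e 2![RHS]mulrA.
  have : (cprod N a)%:K * y = (cprod N b)%:K * z by rewrite ey (mulVKf hA).
  case/(cprod_cancel hy hz) => w hw ->.
  by exists w; split; last by rewrite tofracM mulrA.
have max_ab : cprod N b * cprod N (fun m => a m - b m)%N =
              cprod N a * cprod N (fun m => b m - a m)%N.
  by rewrite -!cprodD; apply: cprod_eq => m _; lia.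
split.
  exists ((cprod N (fun m => b m - a m)%N)%:K * w).
  by split; [apply: laurentM => //; apply: laurent_poly | rewrite tofracM mulrA].
exists ((cprod N (fun m => a m - b m)%N)%:K * w).
split; first by apply: laurentM => //; apply: laurent_poly.
have := congr1 (@tofrac _) max_ab; rewrite !tofracM => E.
by rewrite mulrA -(mulrA _ (cprod N b)%:K) E mulrA (mulfVK hA).
Qed.

Lemma idprod_ext (P P' Q Q' : Kq -> Prop) :
  (forall y, P y <-> P' y) -> (forall y, Q y <-> Q' y) ->
  forall x, idprod P Q x <-> idprod P' Q' x.
Proof.
move=> HP HQ x; split=> -[s [hs ->]]; exists s; split=> // u /hs [];
  by rewrite ?HP ?HQ; split.
Qed.

Lemma idprod_principal g h x :
  idprod (principal g) (principal h) x <-> principal (g * h) x.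
Proof.
split=> [[s [hs ->]]|[w [hw ->]]]; last first.
  exists [:: (g * w, h)]; split; last by rewrite big_seq1 /= mulrAC.
  move=> u; rewrite inE => /eqP -> /=; split; first by exists w.
  by exists 1; split; [exact: laurent1 | rewrite mulr1].
elim: s hs => [|u s IH] hs.
  by exists 0; split; [exact: laurent0 | rewrite big_nil mulr0].
rewrite big_cons; apply: principal_add; last first.
  by apply: IH => v hv; apply: hs; rewrite in_cons hv orbT.
have [[w1 [hw1 ->]] [w2 [hw2 ->]]] := hs u (mem_head _ _).
by exists (w1 * w2); split; [exact: laurentM | rewrite mulrACA].
Qed.

Lemma idbigprod_principal n (l : 'I_n -> nat) (s : seq 'I_n) N :
  (forall i, l i < N)%N -> forall x,
  idbigprod l s x <-> principal (cprod N (fun m => \sum_(i <- s) tlm (l i) m)%N)%:K x.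
Proof.
move=> hl; rewrite cprod_sum; elim: s => [|i s IH] x /=.
  by rewrite big_nil tofrac1 principal1.
rewrite big_cons tofracM -idprod_principal.
by apply: idprod_ext => // y; apply: Iid_principal.
Qed.

(* Exponent of Φ_m in {2L+1}_{q,L+1} / {1}_q. *)
Definition cexp (L m : nat) : nat := ((2 * L).+1 %/ m - L %/ m - 1 %/ m)%N.

Lemma qfall_center L : qfall (2 * L).+1 L.+1 = qb 1 * cprod (2 * L).+2 (cexp L).
Proof.
rewrite (@qfall_cprod (2 * L).+2) //; last by rewrite ltnS mul2n -addnn leq_addl.
rewrite (@qb_cprod (2 * L).+2 1) // -cprodD; apply: cprod_eq => m /andP [m0 _].
have -> : ((2 * L).+1 - L.+1 = L)%N by lia.
rewrite /cexp; case: (ltngtP m 1) => [|m1|->]; first by rewrite ltnNge m0.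
  by rewrite (divn_small m1) subn0 dvdn1 gtn_eqF.
by rewrite !divn1 dvdn1 eqxx; lia.
Qed.

Lemma Za_principal n (l : 'I_n -> nat) x :
  Za l x <-> principal (cprod (2 * lmax l).+2 (cexp (lmax l)))%:K x.
Proof.
have qb1 : (qb 1)%:K != 0 :> Kq by rewrite tofrac_eq0 qb_neq0.
by rewrite /Za qfall_center tofracM mulrC (mulKf qb1).
Qed.

Lemma ZBr_principal n (l : 'I_n -> nat) (iM im : 'I_n) : l im = lmin l -> forall x,
  let N := (2 * lmax l).+2 in
  let S := [seq i <- enum 'I_n | (i != iM) && (i != im)] in
  ZBr l iM im x <->
  principal ((cprod N (cexp (lmax l)))%:K / (cprod N (fun m => lmin l %/ m)%N)%:K *
             (cprod N (fun m => \sum_(i <- S) tlm (l i) m)%N)%:K) x.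
Proof.
move=> hm x N S.
have hl i : (l i < N)%N.
  by have : (l i <= lmax l)%N := leq_bigmax i; rewrite /N; lia.
have qb1 : (qb 1)%:K != 0 :> Kq by rewrite tofrac_eq0 qb_neq0.
rewrite /ZBr qfall_center (@qfact_cprod N) -?hm // !tofracM invfM mulrACA (mulfV qb1) mul1r.
rewrite -scaleset_principal; apply: scaleset_ext => y.
exact: idbigprod_principal.
Qed.

(* Corollary 3.3: the intersection is generated by ∏_m Φ_m^(cexp L m) times
   ∏_m Φ_m^max(0, ∑_{i ≠ i_M, i_m} t_{l_i,m} - l_min/m). *)
Unset Implicit Arguments.
Theorem corollary3p3 (n : nat) (l : 'I_n -> nat) (iM im : 'I_n) :
  (2 <= n)%N -> iM != im -> l iM = lmax l -> l im = lmin l ->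
  forall x : {fraction {poly int}},
    (Za l x /\ ZBr l iM im x) <-> scaleset (RHSgen l iM im)%:K laurent x.
Proof.
move=> _ _ _ hm x.
set N := (2 * lmax l).+2; set S := [seq i <- enum 'I_n | (i != iM) && (i != im)].
have -> : RHSgen l iM im = cprod N (cexp (lmax l)) *
    cprod N (fun m => \sum_(i <- S) tlm (l i) m - lmin l %/ m)%N by rewrite -cprodD.
by rewrite -principal_meet Za_principal (@ZBr_principal n l iM im hm).
Qed.
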